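(* Let $(\Xi,d_\Xi)$ be a metric space, let $\{P^\nu\}_{\nu\in\mathbb{N}}$ be probabilities on $(\Xi,\mathcal{B}(\Xi))$ converging weakly to a probability $P$, and let $\{h^\nu\}_{\nu\in\mathbb{N}}$ be measurable $\overline{\mathbb{R}}$-valued functions on $\Xi$ such that $$\limsup_{K\to+\infty}\ \limsup_{\nu\to+\infty}\mathbb{E}^{P^\nu}\big[h^\nu(\xi)\,\mathbb{1}\{\xi:h^\nu(\xi)\ge K\}\big]=0.$$ Then $$\limsup_{\nu\to+\infty}\mathbb{E}^{P^\nu}\big[h^\nu(\xi)\big]\ \le\ \mathbb{E}^{P}\Big[\limsup_{(\nu,\zeta)\to(+\infty,\xi)}h^\nu(\zeta)\Big].$$
   Context: $\overline{\mathbb{R}}=\mathbb{R}\cup\{-\infty,+\infty\}$; weak convergence means $\int\varphi\,dP^\nu\to\int\varphi\,dP$ for all bounded continuous $\varphi$. For a probability $\mu$ and measurable $\overline{\mathbb{R}}$-valued $g$, $\mathbb{E}^\mu[g]:=\int g_+\,d\mu-\int g_-\,d\mu$ with $g_+=\max\{g,0\}$, $g_-=-\min\{g,0\}$ and conventions $+\infty-\alpha=+\infty$ for all $\alpha\in\overline{\mathbb{R}}$ and $\beta-(+\infty)=-\infty$ for $\beta\in\mathbb{R}$. $\mathbb{1}\{B\}$ is the indicator of $B$. $\limsup_{(\nu,\zeta)\to(+\infty,\xi)}h^\nu(\zeta):=\lim_{\delta\downarrow0}\lim_{N\to\infty}\sup\{h^\nu(\zeta):\nu\ge N,\ d_\Xi(\zeta,\xi)<\delta\}$.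 *)

From HB Require Import structures.
From mathcomp Require Import all_boot all_order all_algebra.
From mathcomp Require Import all_classical all_reals all_analysis.
From mathcomp Require Import measurable_realfun.
Set Implicit Arguments. Unset Strict Implicit. Unset Printing Implicit Defensive.
Import Order.TTheory GRing.Theory Num.Theory.
Local Open Scope classical_set_scope.
Local Open Scope ring_scope.

Definition is_metric (R : realType) (T : Type) (dist : T -> T -> R) : Prop :=
  [/\ forall x y, 0 <= dist x y,
      forall x y, dist x y = 0 <-> x = y,
      forall x y, dist x y = dist y x &
      forall x y z, dist x z <= dist x y + dist y z].

Definition dopen (R : realType) (T : Type) (dist : T -> T -> R) (A : set T) : Prop :=
  forall x, A x -> exists e : R, 0 < e /\ [set y | dist x y < e] `<=` A.

Definition borel_of_metric (R : realType) (d : measure_display)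
  (T : measurableType d) (dist : T -> T -> R) : Prop :=
  @measurable d T = <<s [set A | dopen dist A] >>.

Definition dcontinuous (R : realType) (T : Type) (dist : T -> T -> R) (f : T -> R) : Prop :=
  forall x (e : R), 0 < e -> exists del : R, 0 < del /\
    forall y, dist x y < del -> `|f y - f x| < e.

Definition bounded_fun_R (R : realType) (T : Type) (f : T -> R) : Prop :=
  exists M : R, forall x, `|f x| <= M.

Definition weak_conv (R : realType) (d : measure_display) (T : measurableType d)
  (dist : T -> T -> R) (Pn : nat -> probability T R) (P : probability T R) : Prop :=
  forall f : T -> R, dcontinuous dist f -> bounded_fun_R f ->
    ((fun n => \int[Pn n]_x (f x)%:E) @ \oo --> \int[P]_x (f x)%:E)%E.

(* E^mu[g] := int g_+ - int g_-, with +oo - a = +oo and b - (+oo) = -oo *)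
Definition Eexp (R : realType) (d : measure_display) (T : measurableType d)
  (mu : probability T R) (g : T -> \bar R) : \bar R :=
  let a := (\int[mu]_x (g^\+ x))%E in
  let b := (\int[mu]_x (g^\- x))%E in
  if a == +oo%E then +oo%E else (a - b)%E.

Definition limsup_pinfty (R : realType) (F : R -> \bar R) : \bar R :=
  ereal_inf [set ereal_sup [set F K | K in [set K | M <= K]] | M in [set: R]].

Definition joint_limsup (R : realType) (T : Type) (dist : T -> T -> R)
  (h : nat -> T -> \bar R) (xi : T) : \bar R :=
  ereal_inf [set ereal_sup [set h nu z | nu in [set nu | (N <= nu)%N] & z in
                                         [set z | dist z xi < delta]]
            | delta in [set delta : R | 0 < delta] & N in [set: nat]].

From HB Require Import structures.
From mathcomp Require Import all_boot all_order all_algebra.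
From mathcomp Require Import all_classical all_reals all_analysis.
From mathcomp Require Import measurable_realfun.
From mathcomp Require Import lra.
Set Implicit Arguments.
Unset Strict Implicit.
Unset Printing Implicit Defensive.
Import Order.TTheory GRing.Theory Num.Theory.
Local Open Scope classical_set_scope.
Local Open Scope ring_scope.
Local Open Scope ereal_scope.

(* Fix a truncation level K >= 0 and m in N.  The envelope
     phi_m(x) = sup_{nu >= m, z} clip_{[-m, K]}(h^nu(z)) - m d(x, z)
   is m-Lipschitz and bounded, so weak convergence applies to it; it
   dominates h^n outside {h^n >= K} for n >= m, whence
     limsup_n E^{P^n}[h^n] <= E^P[phi_m] + limsup_n E^{P^n}[h^n 1{h^n >= K}].
   As m grows, phi_m decreases to a function below the joint limsup, and
   monotone convergence (applied to K - phi_m) lets m go to infinity; the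
   uniform integrability hypothesis then removes the tail term as K grows. *)

Lemma lee_real_gt (R : realType) (x y : \bar R) :
  (forall r : R, y < r%:E -> x <= r%:E) -> x <= y.
Proof.
case: y => [r| |] xr; last 2 first.
- exact: leey.
- case: x xr => [s| |] xr //.
  + move: xr => /(_ (s - 1)%R (ltNyr _)); rewrite lee_fin => ?; exfalso; lra.
  + by have := xr 0%R (ltNyr _).
apply/lee_addgt0Pr => e e0; rewrite -EFinD; apply: xr.
by rewrite lte_fin ltrDl.
Qed.

Section metric_space.
Variables (R : realType) (T : Type) (dist : T -> T -> R).
Hypothesis dist_metric : is_metric dist.

Lemma dcontinuous_lipschitz (L : R) (f : T -> R) : (0 <= L)%R ->
  (forall x y, (f x <= f y + L * dist x y)%R) -> dcontinuous dist f.
Proof.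
move: dist_metric => [d_ge0 _ d_sym _] L0 fL x e e0.
have L1 : (0 < L + 1)%R by rewrite ltr_wpDl.
exists (e / (L + 1))%R; split; first by rewrite divr_gt0.
move=> y dxy; have Ldxy : (L * dist x y < e)%R.
  apply: le_lt_trans (_ : (L + 1) * dist x y < e)%R.
    by rewrite ler_wpM2r ?lerDl.
  by rewrite mulrC -ltr_pdivlMr.
have := fL x y; have := fL y x; rewrite d_sym ltr_norml => *.
apply/andP; split; lra.
Qed.

Lemma dopen_joint_limsup_lt (h : nat -> T -> \bar R) (r : R) :
  dopen dist [set x | joint_limsup dist h x < r%:E].
Proof.
move: dist_metric => [_ _ d_sym d_tri] x /=.
move=> /ereal_inf_lt[_ [del del0 [N _ <-]]] Sr.
exists (del / 2)%R; split; first by rewrite divr_gt0.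
move=> y /= dxy; apply: le_lt_trans Sr; apply: le_trans (ereal_inf_lbound _) _.
  by exists (del / 2)%R; [rewrite /= divr_gt0 | exists N].
apply: ereal_sup_le => _ [nu Nnu [z /= zy <-]].
exists nu => //; exists z => //=.
rewrite (le_lt_trans (d_tri z y x))// [dist y x]d_sym.
by rewrite [X in (_ < X)%R](splitr del) ltrD.
Qed.

End metric_space.

Section metric_measurability.
Variables (R : realType) (d : measure_display) (T : measurableType d).
Variable dist : T -> T -> R.
Hypothesis dist_borel : borel_of_metric dist.

Lemma measurable_fun_dopen_lt (f : T -> \bar R) :
  (forall r : R, dopen dist [set x | f x < r%:E]) -> measurable_fun setT f.
Proof.
move=> f_lt; apply: (measurability _ (ErealGenInftyO.measurableE R)).
move=> _ /= -[_ [r ->] <-]; rewrite setTI preimage_itvNyo dist_borel.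
by apply: sub_sigma_algebra; exact: f_lt.
Qed.

Lemma measurable_fun_dcontinuous (f : T -> R) :
  dcontinuous dist f -> measurable_fun setT (EFin \o f).
Proof.
move=> fc; apply: measurable_fun_dopen_lt => r x /=; rewrite lte_fin => fxr.
have [|del [del0 fdel]] := fc x (r - f x)%R; first by rewrite subr_gt0.
exists del; split => // y /fdel; rewrite /= lte_fin ltr_norml => /andP[_].
by rewrite ltrBlDr subrK.
Qed.

End metric_measurability.

Definition eclip (R : realType) (a b : R) (t : \bar R) : \bar R :=
  maxe (mine t b%:E) a%:E.

Section eclip.
Variables (R : realType) (a b : R).
Implicit Type t : \bar R.

Lemma eclip_ge t : a%:E <= eclip a b t.
Proof. by rewrite /eclip le_max lexx orbT. Qed.

Lemma eclip_ge_min t : mine t b%:E <= eclip a b t.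
Proof. by rewrite /eclip le_max lexx. Qed.

Lemma eclip_le t : (a <= b)%R -> eclip a b t <= b%:E.
Proof. by move=> ab; rewrite /eclip ge_max ge_min lexx orbT lee_fin ab. Qed.

Lemma eclip_fin t : (a <= b)%R -> eclip a b t \is a fin_num.
Proof.
move=> ab; rewrite fin_numElt (lt_le_trans (ltNyr a) (eclip_ge t)).
by rewrite (le_lt_trans (eclip_le t ab)) ?ltry.
Qed.

Lemma le_eclip_lower (a' : R) t : (a <= a')%R -> eclip a b t <= eclip a' b t.
Proof. by move=> aa'; rewrite /eclip le_max2// lee_fin. Qed.

End eclip.

Definition lip_envelope (R : realType) (T : Type) (dist : T -> T -> R)
    (h : nat -> T -> \bar R) (K : R) (m : nat) (x : T) : \bar R :=
  ereal_sup [set eclip (- m%:R) K (h nu z) - (m%:R * dist x z)%:E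
             | nu in [set nu | (m <= nu)%N] & z in [set: T]].

Section lip_envelope.
Variables (R : realType) (T : Type) (dist : T -> T -> R).
Variables (h : nat -> T -> \bar R) (K : R).
Hypotheses (dist_metric : is_metric dist) (K_ge0 : (0 <= K)%R).
Local Notation env := (lip_envelope dist h K).

Let lower_le_K m : (- m%:R <= K)%R.
Proof. by rewrite (le_trans _ K_ge0)// oppr_le0. Qed.

Lemma eclip_le_envelope m nu x :
  (m <= nu)%N -> eclip (- m%:R) K (h nu x) <= env m x.
Proof.
move: dist_metric => [_ d_eq0 _ _] mnu; apply: ereal_sup_ubound.
exists nu => //; exists x => //.
by rewrite (proj2 (d_eq0 x x) erefl) mulr0 sube0.
Qed.

Lemma envelope_le m x : env m x <= K%:E.
Proof.
move: dist_metric => [d_ge0 _ _ _]; apply: ge_ereal_sup => _ [nu _ [z _ <-]].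
apply: le_trans (eclip_le (h nu z) (lower_le_K m)).
by rewrite leeBlDr// leeDl// lee_fin mulr_ge0.
Qed.

Lemma envelope_ge m x : (- m%:R)%:E <= env m x.
Proof. exact: le_trans (eclip_ge _ _ _) (eclip_le_envelope x (leqnn m)). Qed.

Lemma envelope_fin m x : env m x \is a fin_num.
Proof.
rewrite fin_numElt (lt_le_trans (ltNyr _) (envelope_ge m x)).
by rewrite (le_lt_trans (envelope_le m x)) ?ltry.
Qed.

Lemma nonincreasing_envelope x : nonincreasing_seq (env ^~ x).
Proof.
apply/nonincreasing_seqP => m; apply: ge_ereal_sup => _ [nu mnu [z _ <-]].
apply: le_trans (_ : eclip (- m%:R) K (h nu z) - (m%:R * dist x z)%:E <= _).
  apply: leeB; first by apply: le_eclip_lower; rewrite lerN2 ler_nat.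
  by rewrite lee_fin ler_wpM2r ?ler_nat//; case: dist_metric.
by apply: ereal_sup_ubound; exists nu; [exact: ltnW | exists z].
Qed.

Lemma envelope_lipschitz m x y : env m x <= env m y + (m%:R * dist x y)%:E.
Proof.
move: dist_metric => [_ _ d_sym d_tri].
apply: ge_ereal_sup => _ [nu mnu [z _ <-]].
set c := eclip _ _ _; have c_fin : c \is a fin_num by exact: eclip_fin.
rewrite -(fineK c_fin).
apply: (@le_trans _ _ ((fine c - m%:R * dist y z)%:E + (m%:R * dist x y)%:E)).
  rewrite -EFinB -EFinD lee_fin.
  have := ler_wpM2l (ler0n R m) (d_tri y x z); rewrite [dist y x]d_sym mulrDr.
  lra.
apply: leeD2r; apply: ereal_sup_ubound; exists nu => //; exists z => //.
by rewrite EFinB fineK.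
Qed.

Lemma dcontinuous_envelope m : dcontinuous dist (fine \o env m).
Proof.
apply: (dcontinuous_lipschitz dist_metric (L := m%:R)) => // x y /=.
by rewrite -lee_fin EFinD !fineK ?envelope_fin//; exact: envelope_lipschitz.
Qed.

Lemma bounded_envelope m : bounded_fun_R (fine \o env m).
Proof.
exists (K + m%:R)%R => x /=; have := envelope_le m x; have := envelope_ge m x.
rewrite -(fineK (envelope_fin m x)) !lee_fin /= ler_norml => lo up.
by rewrite (le_trans _ lo) ?(le_trans up) ?lerN2 ?lerDl ?lerDr.
Qed.

Lemma envelope_inf_le_joint_limsup x :
  ereal_inf (range (env ^~ x)) <= joint_limsup dist h x.
Proof.
move: dist_metric => [d_ge0 _ d_sym _].
apply: lee_real_gt => a /ereal_inf_lt[_ [del /= del0 [N _ <-]]] Sa.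
pose M := Num.bound (`|a| + `|K - a| / del)%R.
have M_gt : (`|a| + `|K - a| / del < M%:R)%R.
  by apply: archi_boundP; rewrite addr_ge0// divr_ge0// ltW.
have M_le_m : (M%:R <= (N + M)%:R :> R)%R by rewrite ler_nat leq_addl.
apply: le_trans (ereal_inf_lbound (imageT _ (N + M)%N)) _.
apply: ge_ereal_sup => _ [nu Mnu [z _ <-]].
have [zx|zx] := ltP (dist z x) del.
  have hza : h nu z < a%:E.
    apply: le_lt_trans Sa; apply: ereal_sup_ubound; exists nu => /=.
      exact: leq_trans (leq_addr _ _) Mnu.
    by exists z.
  rewrite leeBlDr// (le_trans _ (leeDl _ _)) ?lee_fin ?mulr_ge0//.
  rewrite /eclip ge_max ge_min (ltW hza) /= lee_fin lerNl.
  apply: le_trans M_le_m; apply: le_trans (ltW M_gt).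
  by apply: le_trans (ler_norm _) _; rewrite normrN lerDl divr_ge0// ltW.
apply: le_trans (leeB (eclip_le (h nu z) (lower_le_K _)) (lexx _)) _.
rewrite -EFinB lee_fin lerBlDl -lerBlDr.
have Ka_le : (K - a <= M%:R * del)%R.
  rewrite -ler_pdivrMr//; apply: le_trans (ltW M_gt).
  apply: le_trans (_ : `|K - a| / del <= _)%R; last by rewrite lerDr.
  by apply: ler_wpM2r; [rewrite invr_ge0 ltW | exact: ler_norm].
by rewrite (le_trans Ka_le)// d_sym ler_pM// ltW.
Qed.

Lemma le_envelope_add_tail m n x : (m <= n)%N ->
  h n x <= env m x + h n x * (\1_[set y | (K%:E <= h n y)%E] x)%:E.
Proof.
move=> mn.
have env_ge := le_trans (eclip_ge_min _ _ _) (eclip_le_envelope x mn).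
rewrite indicE; case: (boolP (x \in _)); rewrite ?inE /= => hK.
  rewrite mule1 leeDr// (le_trans _ env_ge)// le_min lee_fin K_ge0 andbT.
  by rewrite (le_trans _ hK) ?lee_fin.
rewrite mule0 adde0 (le_trans _ env_ge)// le_min lexx /=.
by rewrite notin_setE /= in hK; rewrite ltW// ltNge; apply/negP.
Qed.

End lip_envelope.

Lemma measurable_fun_nonincreasing_inf (d : measure_display)
    (T : measurableType d) (R : realType) (phi : (T -> \bar R)^nat) :
  (forall m, measurable_fun setT (phi m)) ->
  (forall x, nonincreasing_seq (phi ^~ x)) ->
  measurable_fun setT (fun x => ereal_inf (range (phi ^~ x))).
Proof.
move=> mphi phi_ni; apply: (emeasurable_fun_cvg _ _ mphi) => x _.
exact: ereal_nonincreasing_cvgn.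
Qed.

Section Eexp.
Variables (d : measure_display) (T : measurableType d) (R : realType).
Variable mu : probability T R.
Implicit Types f g v : T -> \bar R.

Lemma Eexp_ge0 f : (forall x, 0 <= f x) -> Eexp mu f = \int[mu]_x f x.
Proof.
move=> f0; rewrite /Eexp.
have -> : \int[mu]_x f^\+ x = \int[mu]_x f x.
  by apply: eq_integral => x _; rewrite funeposE (max_l (f0 x)).
have -> : \int[mu]_x f^\- x = 0.
  rewrite (eq_integral (cst 0)) ?integral0// => x _.
  by rewrite funenegE /= max_r// leeNl oppe0.
by case: ifPn => [/eqP ->|_]; rewrite ?sube0.
Qed.

Lemma Eexp_integrable f : mu.-integrable setT f -> Eexp mu f = \int[mu]_x f x.
Proof.
move=> fi; have := integrable_pos_fin_num measurableT fi.
by rewrite /Eexp (integralE _ _ f) fin_numE => /andP[_ /negbTE ->].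
Qed.

Lemma le_Eexp f g : measurable_fun setT f -> measurable_fun setT g ->
  (forall x, f x <= g x) -> Eexp mu f <= Eexp mu g.
Proof.
move=> mf mg fg.
have pos : \int[mu]_x f^\+ x <= \int[mu]_x g^\+ x.
  apply: ge0_le_integral => //; try exact: measurable_funepos.
  by move=> x _; rewrite !funeposE le_max2.
have neg : \int[mu]_x g^\- x <= \int[mu]_x f^\- x.
  apply: ge0_le_integral => //; try exact: measurable_funeneg.
  by move=> x _; rewrite !funenegE le_max2// leeN2.
rewrite /Eexp; case: ifPn => [/eqP fy|_].
  by rewrite fy leye_eq in pos; rewrite pos.
by case: ifPn => _; [exact: leey | exact: leeB].
Qed.

Lemma Eexp_le_integralD f g v : measurable_fun setT f ->
  mu.-integrable setT g -> measurable_fun setT v -> (forall x, 0 <= v x) ->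
  (forall x, f x <= g x + v x) -> Eexp mu f <= \int[mu]_x g x + \int[mu]_x v x.
Proof.
move=> mf gi mv v0 fgv.
have mgv : measurable_fun setT (g \+ v).
  exact: emeasurable_funD (measurable_int _ gi) mv.
apply: le_trans (le_Eexp mf mgv fgv) _.
have [vy|vy] := eqVneq (\int[mu]_x v x) +oo.
  have /fin_numP[gNy _] := integrable_fin_num measurableT gi.
  by rewrite vy addey ?leey.
have vi : mu.-integrable setT v.
  apply/integrableP; split => //; under eq_integral do rewrite gee0_abs//.
  by rewrite ltey.
by rewrite Eexp_integrable ?integralD//; exact: integrableD.
Qed.

Lemma integral_cstB_Eexp (K : R) f : (0 <= K)%R -> measurable_fun setT f ->
  (forall x, f x <= K%:E) -> \int[mu]_x (K%:E - f x) = K%:E - Eexp mu f.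
Proof.
move=> K0 mf fK.
have mKf : measurable_fun setT (fun x => K%:E - f x).
  exact: emeasurable_funB.
have Kf0 x : 0 <= K%:E - f x by rewrite sube_ge0 ?fK// orbC fin_numE.
have f_split x : K%:E + f^\- x = (K%:E - f x) + f^\+ x.
  rewrite funeposE funenegE; move: (fK x); case: (f x) => [r| |] //= rK.
    rewrite -!EFin_max -!EFinD; congr EFin; have [r0|r0] := leP 0%R r.
      by rewrite max_r ?oppr_le0// addr0 subrK.
    by rewrite max_l ?addr0// oppr_ge0 ltW.
  by rewrite max_l ?leey// max_r ?leNye// adde0.
have intK : \int[mu]_x (cst K%:E x) = K%:E.
  by rewrite integral_cst// [X in _ * X]probability_setT mule1.
have pos_fin : \int[mu]_x f^\+ x \is a fin_num.
  rewrite ge0_fin_numE ?integral_ge0// (@le_lt_trans _ _ K%:E) ?ltry// -intK.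
  apply: ge0_le_integral => //; first exact: measurable_funepos.
  by move=> x _; rewrite funeposE ge_max fK lee_fin K0.
have int_split : K%:E + \int[mu]_x f^\- x =
    \int[mu]_x (K%:E - f x) + \int[mu]_x f^\+ x.
  have mfp := measurable_funepos mf; have mfn := measurable_funeneg mf.
  rewrite -[in LHS]intK -!ge0_integralD//.
  by apply: eq_integral => x _; exact: f_split.
have := pos_fin; rewrite /Eexp fin_numE => /andP[_ /negbTE ->].
rewrite -[LHS](addeK _ pos_fin) -int_split.
move: pos_fin; set a := \int[mu]_x f^\+ x; set b := \int[mu]_x f^\- x => a_fin.
by rewrite (oppeB (fin_num_adde_defr _ a_fin)) (addeC (- a)%E b) (addeA K%:E b).
Qed.

Lemma Eexp_nonincreasing_cvg (phi : (T -> \bar R)^nat) (K : R) :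
  (forall m, measurable_fun setT (phi m)) -> (forall m x, phi m x <= K%:E) ->
  (forall x, nonincreasing_seq (phi ^~ x)) ->
  Eexp mu (phi m) @[m --> \oo] -->
  Eexp mu (fun x => ereal_inf (range (phi ^~ x))).
Proof.
wlog K0 : K / (0 <= K)%R => [wlogK mphi phiK|mphi phiK phi_ni].
  apply: (wlogK (Num.max K 0%R)) => // [|m x].
    by rewrite le_max lexx orbT.
  by rewrite (le_trans (phiK m x))// lee_fin le_max lexx.
set phi_inf := (fun x : T => ereal_inf _).
have mphi_inf := measurable_fun_nonincreasing_inf mphi phi_ni.
have phi_inf_K x : phi_inf x <= K%:E.
  by apply: le_trans (phiK 0%N x); apply: ereal_inf_lbound; exists 0%N.
pose g m x := K%:E - phi m x.
have mg m : measurable_fun setT (g m) by exact: emeasurable_funB.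
have g0 m x : setT x -> 0 <= g m x by rewrite sube_ge0 ?phiK// orbC fin_numE.
have g_nd x : setT x -> nondecreasing_seq (g ^~ x).
  by move=> _ m n mn; apply: leeB => //; exact: phi_ni.
have g_cvg x : g ^~ x @ \oo --> K%:E - phi_inf x.
  apply: cvgeB; [exact: fin_num_adde_defr|exact: cvg_cst|].
  exact: ereal_nonincreasing_cvgn.
have int_cvg : K%:E - Eexp mu (phi m) @[m --> \oo] --> K%:E - Eexp mu phi_inf.
  rewrite -integral_cstB_Eexp//.
  under eq_fun do rewrite -integral_cstB_Eexp//.
  have -> : \int[mu]_x (K%:E - phi_inf x) = \int[mu]_x limn (g ^~ x).
    by apply: eq_integral => x _; rewrite (cvg_lim _ (g_cvg x)).
  exact: cvg_monotone_convergence.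
have subKK y : K%:E - (K%:E - y) = y.
  by rewrite (oppeB (fin_num_adde_defr _ _)) ?(addeA K%:E) ?subee ?add0e.
rewrite -[Eexp mu phi_inf]subKK; under eq_fun do rewrite -[Eexp mu _]subKK.
by apply: cvgeB; [exact: fin_num_adde_defr|exact: cvg_cst|exact: int_cvg].
Qed.

End Eexp.

Section envelope_integrable.
Variables (R : realType) (d : measure_display) (T : measurableType d).
Variables (dist : T -> T -> R) (h : nat -> T -> \bar R) (K : R).
Hypotheses (dist_metric : is_metric dist) (dist_borel : borel_of_metric dist).
Hypothesis K_ge0 : (0 <= K)%R.

Lemma measurable_envelope m : measurable_fun setT (lip_envelope dist h K m).
Proof.
have -> : lip_envelope dist h K m = EFin \o (fine \o lip_envelope dist h K m).
  by apply/funext => x /=; rewrite fineK// envelope_fin.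
exact/(measurable_fun_dcontinuous dist_borel)/dcontinuous_envelope.
Qed.

Lemma integrable_envelope (mu : probability T R) m :
  mu.-integrable setT (lip_envelope dist h K m).
Proof.
have [M envM] := bounded_envelope h dist_metric K_ge0 m.
apply: le_integrable (measurable_envelope m) _
  (finite_measure_integrable_cst mu M measurableT) => // x _ /=.
rewrite -(fineK (envelope_fin h dist_metric K_ge0 m x)) !abse_EFin lee_fin.
exact: le_trans (envM x) (ler_norm _).
Qed.

End envelope_integrable.

Lemma limn_esup_le_cvgD (R : realType) (u b c : (\bar R)^nat) (l : R) :
  (\forall n \near \oo, u n <= b n + c n) -> b @ \oo --> l%:E ->
  limn_esup u <= l%:E + limn_esup c.
Proof.
move=> ubc bl; apply/lee_addgt0Pr => e e0.
have b_lt : \forall n \near \oo, b n < (l + e)%:E.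
  apply: (bl [set y | y < (l + e)%:E]).
  by apply: open_ereal_lt'; rewrite lte_fin ltrDl.
have [N _ uN] : \forall n \near \oo, u n <= (l + e)%:E + c n.
  near=> n; apply: le_trans (_ : u n <= b n + c n) _; first by near: n.
  by apply: leeD2r; apply: ltW; near: n.
have c_cvg :
    (l + e)%:E + esups c n @[n --> \oo] --> (l + e)%:E + limn (esups c).
  apply: cvgeD; [exact: fin_num_adde_defr|exact: cvg_cst|exact: is_cvg_esups].
rewrite !limn_esup_lim addeAC -EFinD -(cvg_lim _ c_cvg)//.
apply: lee_lim; [exact: is_cvg_esups|by apply/cvg_ex; eexists; exact: c_cvg|].
exists N => // n /= Nn; apply: ge_ereal_sup => _ [k /= nk <-].
apply: le_trans (uN k (leq_trans Nn nk)) _; apply: leeD2l.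
by apply: ereal_sup_ubound; exists k.
Unshelve. all: by end_near.
Qed.

Section weak_convergence.
Variables (R : realType) (d : measure_display) (T : measurableType d).
Variables (dist : T -> T -> R) (h : nat -> T -> \bar R).
Variables (Pn : nat -> probability T R) (P : probability T R).
Hypotheses (dist_metric : is_metric dist) (dist_borel : borel_of_metric dist).
Hypothesis Pn_P : weak_conv dist Pn P.
Hypothesis mh : forall n, measurable_fun setT (h n).

Local Notation tail K n :=
  (fun x => h n x * (\1_[set y | (K%:E <= h n y)%E] x)%:E).

Section truncation_level.
Variables (K beta : R).
Hypothesis K_ge0 : (0 <= K)%R.
Hypothesis tail_le : limn_esup (fun n => Eexp (Pn n) (tail K n)) <= beta%:E.
Local Notation env := (lip_envelope dist h K).

Lemma limn_esup_Eexp_le_envelope m :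
  limn_esup (fun n => Eexp (Pn n) (h n)) <= Eexp P (env m) + beta%:E.
Proof.
have tail_ge0 n x : 0 <= tail K n x.
  rewrite indicE; case: (boolP (x \in _)); rewrite ?inE /= => hK.
    by rewrite mule1 (le_trans _ hK) ?lee_fin.
  by rewrite mule0.
have mtail n : measurable_fun setT (tail K n).
  apply/emeasurable_funM/measurable_EFinP/measurable_indic => //.
  by rewrite -[X in measurable X]setTI; exact: emeasurable_fun_c_infty.
have env_int mu := integrable_envelope h dist_metric dist_borel K_ge0 mu m.
have I_fin := integrable_fin_num measurableT (env_int P).
rewrite Eexp_integrable// -(fineK I_fin).
apply: le_trans (limn_esup_le_cvgD (b := fun n => \int[Pn n]_x env m x)
  (l := fine (\int[P]_x env m x))
  (c := fun n => Eexp (Pn n) (tail K n)) _ _) _.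
- near=> n; rewrite [X in _ <= _ + X]Eexp_ge0//.
  apply: Eexp_le_integralD => // x; apply: le_envelope_add_tail => //.
  by near: n; exists m.
- have env_fineK (mu : measure T R) :
      \int[mu]_x (fine (env m x))%:E = \int[mu]_x env m x.
    by apply: eq_integral => x _; rewrite fineK// envelope_fin.
  rewrite fineK// -env_fineK; under eq_fun do rewrite -env_fineK.
  exact: Pn_P (dcontinuous_envelope _ _ _ _) (bounded_envelope _ _ _ _).
- by rewrite leeD2l.
Unshelve. all: by end_near.
Qed.

Lemma limn_esup_Eexp_le_joint_limsup :
  limn_esup (fun n => Eexp (Pn n) (h n)) <=
  Eexp P (joint_limsup dist h) + beta%:E.
Proof.
have menv := measurable_envelope h dist_metric dist_borel K_ge0.
have env_ni := nonincreasing_envelope h K dist_metric.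
have env_cvg := Eexp_nonincreasing_cvg (mu := P) menv
  (envelope_le h dist_metric K_ge0) env_ni.
have inf_le : Eexp P (fun x => ereal_inf (range (env ^~ x))) <=
    Eexp P (joint_limsup dist h).
  apply: le_Eexp; first exact: measurable_fun_nonincreasing_inf.
    apply: (measurable_fun_dopen_lt dist_borel) => r.
    exact: dopen_joint_limsup_lt.
  exact: envelope_inf_le_joint_limsup.
apply: le_trans (leeD2r _ inf_le).
have env_beta_cvg : Eexp P (env m) + beta%:E @[m --> \oo] -->
    Eexp P (fun x => ereal_inf (range (env ^~ x))) + beta%:E.
  by apply: cvgeD env_cvg _; [exact: fin_num_adde_defl|exact: cvg_cst].
rewrite -(cvg_lim _ env_beta_cvg)//; apply: lime_ge.
  by apply/cvg_ex; eexists; exact: env_beta_cvg.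
exact: nearW limn_esup_Eexp_le_envelope.
Qed.

End truncation_level.

End weak_convergence.

Local Close Scope ereal_scope.
Unset Implicit Arguments. Set Strict Implicit.

Theorem corollary3p6 (R : realType) (d : measure_display) (T : measurableType d)
  (dist : T -> T -> R) (Pn : nat -> probability T R) (P : probability T R)
  (h : nat -> T -> \bar R) :
  is_metric dist ->
  borel_of_metric dist ->
  weak_conv dist Pn P ->
  (forall n, measurable_fun [set: T] (h n : T -> \bar R)) ->
  limsup_pinfty (fun K : R => limn_esup (fun n =>
      Eexp (Pn n) (fun x => (h n x * (\1_[set y | (K%:E <= h n y)%E] x)%:E)%E))) = 0%E ->
  (limn_esup (fun n => Eexp (Pn n) (h n)) <= Eexp P (joint_limsup dist h))%E.
Proof.
move=> dist_metric dist_borel Pn_P mh tail_lim.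
apply/lee_addgt0Pr => e e0.
set F := limsup_pinfty _ in tail_lim.
have /ereal_inf_lt[_ [M _ <-]] : (F < e%:E)%E by rewrite tail_lim lte_fin.
move=> /ltW tail_le.
pose K := Num.max M 0.
apply: (limn_esup_Eexp_le_joint_limsup dist_metric dist_borel Pn_P mh (K := K)).
  by rewrite le_max lexx orbT.
apply: le_trans tail_le; apply: ereal_sup_ubound; exists K => //=.
by rewrite le_max lexx.
Qed.
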